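(* For every set of formulas $\Gamma$ and formula $\alpha$: if $\Gamma \vDash_{\bf Km} \alpha$ then there exists a finite subset $\Gamma_0\subseteq\Gamma$ such that $\Gamma_0 \vDash_{\bf Km} \alpha$.
   Context: Formulas are built from a denumerable set of propositional variables by the unary connectives $\neg$, $\Box$ and the binary connective $\to$; $For$ is the set of all formulas. Nmatrix semantics: an Nmatrix has a domain $A$, a set $D\subseteq A$ of designated values and, for each connective, a multioperation assigning to each tuple of arguments a nonempty subset of $A$. A valuation is a map $v:For\to A$ with $v(\neg\alpha)\in\tilde\neg(v(\alpha))$, $v(\Box\alpha)\in\tilde\Box(v(\alpha))$, $v(\alpha\to\beta)\in v(\alpha)\tilde\to v(\beta)$. $\Gamma\vDash\alpha$ iff every valuation $v$ with $v(\gamma)\in D$ for all $\gamma\in\Gamma$ has $v(\alpha)\in D$. The Nmatrix for ${\bf Km}$ (consequence $\vDash_{\bf Km}$): domain $\{T^+,C^+,F^+,I^+,T^-,C^-,F^-,I^-\}$, designated set $+=\{T^+,C^+,F^+,I^+\}$, and $-=\{T^-,C^-,F^-,I^-\}$. Negation: $\tilde\neg T^+=\{F^-\}$, $\tilde\neg C^+=\{C^-\}$, $\tilde\neg F^+=\{T^-\}$, $\tilde\neg I^+=\{I^-\}$, $\tilde\neg T^-=\{F^+\}$, $\tilde\neg C^-=\{C^+\}$, $\tilde\neg F^-=\{T^+\}$, $\tilde\neg I^-=\{I^+\}$. Necessity: $\tilde\Box x=+$ if $x\in\{T^+,T^-,I^+,I^-\}$, and $\tilde\Box x=-$ otherwise.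 Implication (row $x$, column $y$ gives $x\tilde\to y$): $$\begin{array}{c|cccccccc} \to & T^+ & C^+ & F^+ & I^+ & T^- & C^- & F^- & I^-\\\hline T^+ & \{T^+\}&\{C^+\}&\{F^+\}&\{I^+\}&\{T^-\}&\{C^-\}&\{F^-\}&\{I^-\}\\ C^+ & \{T^+\}&\{T^+,C^+\}&\{C^+\}&\{I^+\}&\{T^-\}&\{T^-,C^-\}&\{C^-\}&\{I^-\}\\ F^+ & \{T^+\}&\{T^+\}&\{T^+\}&\{I^+\}&\{T^-\}&\{T^-\}&\{T^-\}&\{I^-\}\\ I^+ & \{I^+\}&\{I^+\}&\{I^+\}&\{I^+\}&\{I^-\}&\{I^-\}&\{I^-\}&\{I^-\}\\ T^- & \{T^+\}&\{C^+\}&\{F^+\}&\{I^+\}&\{T^+\}&\{C^+\}&\{F^+\}&\{I^+\}\\ C^- & \{T^+\}&\{T^+,C^+\}&\{C^+\}&\{I^+\}&\{T^+\}&\{T^+,C^+\}&\{C^+\}&\{I^+\}\\ F^- & \{T^+\}&\{T^+\}&\{T^+\}&\{I^+\}&\{T^+\}&\{T^+\}&\{T^+\}&\{I^+\}\\ I^- & \{I^+\}&\{I^+\}&\{I^+\}&\{I^+\}&\{I^+\}&\{I^+\}&\{I^+\}&\{I^+\}\end{array}$$ *)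

From Stdlib Require Import List.
Import ListNotations.

Inductive formula : Type :=
| Var : nat -> formula
| Neg : formula -> formula
| Box : formula -> formula
| Imp : formula -> formula -> formula.

Inductive val : Type :=
| Tp | Cp | Fp | Ip | Tm | Cm | Fm | Im.

(* Designated values: + = {T+, C+, F+, I+}. *)
Definition designated (x : val) : Prop :=
  match x with Tp | Cp | Fp | Ip => True | _ => False end.

Definition neg_op (x : val) : list val :=
  match x with
  | Tp => [Fm] | Cp => [Cm] | Fp => [Tm] | Ip => [Im]
  | Tm => [Fp] | Cm => [Cp] | Fm => [Tp] | Im => [Ip]
  end.

Definition plus_set : list val := [Tp; Cp; Fp; Ip].
Definition minus_set : list val := [Tm; Cm; Fm; Im].

Definition box_op (x : val) : list val :=
  match x with
  | Tp | Tm | Ip | Im => plus_set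
  | _ => minus_set
  end.

Definition imp_op (x y : val) : list val :=
  match x with
  | Tp => [y]
  | Cp => match y with
          | Tp => [Tp] | Cp => [Tp; Cp] | Fp => [Cp] | Ip => [Ip]
          | Tm => [Tm] | Cm => [Tm; Cm] | Fm => [Cm] | Im => [Im]
          end
  | Fp => match y with
          | Tp | Cp | Fp => [Tp] | Ip => [Ip]
          | Tm | Cm | Fm => [Tm] | Im => [Im]
          end
  | Ip => match y with
          | Tp | Cp | Fp | Ip => [Ip]
          | _ => [Im]
          end
  | Tm => match y with
          | Tp | Tm => [Tp] | Cp | Cm => [Cp] | Fp | Fm => [Fp] | Ip | Im => [Ip]
          end
  | Cm => match y with
          | Tp | Tm => [Tp] | Cp | Cm => [Tp; Cp] | Fp | Fm => [Cp] | Ip | Im => [Ip]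
          end
  | Fm => match y with
          | Ip | Im => [Ip]
          | _ => [Tp]
          end
  | Im => [Ip]
  end.

Definition valuation (v : formula -> val) : Prop :=
  forall a b : formula,
    In (v (Neg a)) (neg_op (v a)) /\
    In (v (Box a)) (box_op (v a)) /\
    In (v (Imp a b)) (imp_op (v a) (v b)).

Definition Km_conseq (Gamma : formula -> Prop) (alpha : formula) : Prop :=
  forall v : formula -> val, valuation v ->
    (forall g, Gamma g -> designated (v g)) -> designated (v alpha).

(* A countermodel to [Gamma |= alpha] is exactly an
   assignment satisfying a family of constraints, each of which inspects finitely many
   formulas: the closure conditions of a valuation, [designated (v g)] for [g] in [Gamma],
   and [~ designated (v alpha)].  If [Gamma |= alpha] had no finite witness, every finite
   subfamily would be satisfiable, and a Koenig-style argument over the eight truth values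
   (fixing the value of the formulas one at a time along an enumeration) satisfies the
   whole family at once. *)

From Stdlib Require Import List.
From Stdlib Require Import Arith Lia Classical ClassicalEpsilon Cantor FinFun.
Import ListNotations.

Section Compactness.

Variables (I V J : Type).
Variable enc : I -> nat.
Hypothesis enc_injective : Injective enc.
Hypothesis V_finite : Finite V.

Variable admissible : J -> Prop.
Variable dom : J -> list I.
Variable test : J -> (I -> V) -> Prop.
Hypothesis test_local : forall j v w,
  (forall i, In i (dom j) -> v i = w i) -> test j v -> test j w.

Definition agree_below (n : nat) (c c' : I -> V) : Prop :=
  forall i, enc i < n -> c i = c' i.

Definition extendable (n : nat) (c : I -> V) : Prop :=
  forall L, (forall j, In j L -> admissible j) ->
  exists v, (forall j, In j L -> test j v) /\ agree_below n c v.

Definition update (c : I -> V) (i : I) (x : V) : I -> V :=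
  fun k => if Nat.eqb (enc k) (enc i) then x else c k.

Lemma extendable_update n c i :
  enc i = n -> extendable n c -> exists x, extendable (S n) (update c i x).
Proof.
  intros Hi Hc. apply NNPP; intro Hnone.
  assert (Hbad : forall x, exists Lx, (forall j, In j Lx -> admissible j) /\
      ~ exists v, (forall j, In j Lx -> test j v) /\ agree_below (S n) (update c i x) v).
  { intro x. apply NNPP; intro H. apply Hnone. exists x. intros L HL.
    apply NNPP; intro Hv. apply H. exists L. auto. }
  (* Finitely many values, so the failing subfamilies have a finite union; a solution
     of the union then refutes the failure for its own value at [i]. *)
  destruct (choice _ Hbad) as [Lof HLof].
  destruct V_finite as [vals Hvals].
  destruct (Hc (flat_map Lof vals)) as [v [Hv Hagree]].
  { intros j Hj. apply in_flat_map in Hj as [x [_ Hj]]. exact (proj1 (HLof x) j Hj). }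
  apply (proj2 (HLof (v i))). exists v. split.
  - intros j Hj. apply Hv, in_flat_map. eauto.
  - intros k Hk. unfold update. destruct (Nat.eqb_spec (enc k) (enc i)) as [E | E].
    + now rewrite (enc_injective _ _ E).
    + apply Hagree. lia.
Qed.

Lemma extendable_step n c :
  extendable n c -> exists c', agree_below n c c' /\ extendable (S n) c'.
Proof.
  intro Hc. destruct (classic (exists i, enc i = n)) as [[i Hi] | Hnone].
  - destruct (extendable_update n c i Hi Hc) as [x Hx].
    exists (update c i x). split; [|exact Hx].
    intros k Hk. unfold update. destruct (Nat.eqb_spec (enc k) (enc i)); [lia | easy].
  - exists c. split; [easy|]. intros L HL.
    destruct (Hc L HL) as [v [Hv Hagree]]. exists v. split; [exact Hv|].
    intros k Hk. apply Hagree.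
    assert (enc k <> n) by (intro E; apply Hnone; eauto). lia.
Qed.

Section Chain.

Variable c0 : I -> V.

Definition next (n : nat) (c : I -> V) : I -> V :=
  epsilon (inhabits c) (fun c' => agree_below n c c' /\ extendable (S n) c').

Fixpoint chain (n : nat) : I -> V :=
  match n with
  | 0 => c0
  | S m => next m (chain m)
  end.

Lemma chain_extendable : extendable 0 c0 -> forall n,
  extendable n (chain n) /\ agree_below n (chain n) (chain (S n)).
Proof.
  intros H0 n. induction n as [|n [IH _]].
  - split; [exact H0|]. apply (epsilon_spec (inhabits c0) _ (extendable_step 0 c0 H0)).
  - split.
    + apply (epsilon_spec _ _ (extendable_step n _ IH)).
    + apply (epsilon_spec _ _ (extendable_step (S n) _
        (proj2 (epsilon_spec _ _ (extendable_step n _ IH))))).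
Qed.

Lemma chain_coherent : extendable 0 c0 -> forall n m,
  n <= m -> agree_below n (chain n) (chain m).
Proof.
  intros H0 n m Hnm i Hi. induction Hnm as [|m Hnm IH]; [reflexivity|].
  rewrite IH. apply (chain_extendable H0 m). lia.
Qed.

Definition chain_limit (i : I) : V := chain (S (enc i)) i.

Lemma chain_limit_agree : extendable 0 c0 -> forall n,
  agree_below n (chain n) chain_limit.
Proof.
  intros H0 n i Hi. symmetry. apply (chain_coherent H0); lia.
Qed.

End Chain.

Theorem compactness :
  (forall L, (forall j, In j L -> admissible j) ->
     exists v, forall j, In j L -> test j v) ->
  exists v, forall j, admissible j -> test j v.
Proof.
  intro Hfin. destruct (Hfin [] ltac:(easy)) as [c0 _].
  assert (H0 : extendable 0 c0).
  { intros L HL. destruct (Hfin L HL) as [v Hv]. exists v. split; [exact Hv|].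
    intros i Hi. lia. }
  exists (chain_limit c0). intros j Hj.
  set (n := S (list_max (map enc (dom j)))).
  destruct (proj1 (chain_extendable c0 H0 n) [j]) as [v [Hv Hagree]].
  { now intros j' [<- | []]. }
  apply (test_local j v); [|apply Hv; now left].
  intros i Hi.
  assert (enc i < n).
  { apply Nat.lt_succ_r.
    refine (proj1 (Forall_forall _ _) (proj1 (list_max_le _ _) (le_n _)) _ _).
    now apply in_map. }
  rewrite <- Hagree by easy. now apply chain_limit_agree.
Qed.

End Compactness.

Fixpoint encode (f : formula) : nat :=
  match f with
  | Var n => Cantor.to_nat (0, n)
  | Neg a => Cantor.to_nat (1, encode a)
  | Box a => Cantor.to_nat (2, encode a)
  | Imp a b => Cantor.to_nat (3, Cantor.to_nat (encode a, encode b))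
  end.

Lemma to_nat_injective : Injective Cantor.to_nat.
Proof.
  intros p q E. now rewrite <- (cancel_of_to p), <- (cancel_of_to q), E.
Qed.

Lemma encode_injective : Injective encode.
Proof.
  intro f. induction f as [n | a IH | a IH | a IHa b IHb];
    intros [m | a' | a' | a' b'] E; cbn [encode] in E;
    apply to_nat_injective, pair_equal_spec in E as [Etag E]; try discriminate.
  - now subst.
  - now rewrite (IH a').
  - now rewrite (IH a').
  - apply to_nat_injective, pair_equal_spec in E as [Ea Eb].
    now rewrite (IHa a'), (IHb b').
Qed.

Lemma val_finite : Finite val.
Proof.
  exists [Tp; Cp; Fp; Ip; Tm; Cm; Fm; Im]. intros []; simpl; tauto.
Qed.

Inductive km_constraint : Type :=
| Closure (a b : formula)
| Premise (g : formula)
| Refutation.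

Section Countermodels.

Variable alpha : formula.

Definition km_dom (j : km_constraint) : list formula :=
  match j with
  | Closure a b => [a; b; Neg a; Box a; Imp a b]
  | Premise g => [g]
  | Refutation => [alpha]
  end.

Definition km_test (j : km_constraint) (v : formula -> val) : Prop :=
  match j with
  | Closure a b =>
      In (v (Neg a)) (neg_op (v a)) /\
      In (v (Box a)) (box_op (v a)) /\
      In (v (Imp a b)) (imp_op (v a) (v b))
  | Premise g => designated (v g)
  | Refutation => ~ designated (v alpha)
  end.

Definition km_admissible (Delta : formula -> Prop) (j : km_constraint) : Prop :=
  match j with
  | Premise g => Delta g
  | _ => True
  end.

Lemma km_test_local j v w :
  (forall f, In f (km_dom j) -> v f = w f) -> km_test j v -> km_test j w.
Proof.
  destruct j; cbn; intros E H; rewrite <- !E by tauto; exact H.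
Qed.

Lemma not_Km_conseq_iff Delta :
  ~ Km_conseq Delta alpha <->
  exists v, forall j, km_admissible Delta j -> km_test j v.
Proof.
  split.
  - intro Hnot. apply NNPP; intro Hno. apply Hnot. intros v Hv HDelta.
    apply NNPP; intro Halpha. apply Hno. exists v. intros [a b | g |] Hj; cbn.
    + apply Hv.
    + exact (HDelta g Hj).
    + exact Halpha.
  - intros [v Hv] Hcons. apply (Hv Refutation I), Hcons.
    + intros a b. exact (Hv (Closure a b) I).
    + intros g Hg. exact (Hv (Premise g) Hg).
Qed.

End Countermodels.

Definition premises (L : list km_constraint) : list formula :=
  flat_map (fun j => match j with Premise g => [g] | _ => [] end) L.

Lemma In_premises g L : In g (premises L) <-> In (Premise g) L.
Proof.
  unfold premises. rewrite in_flat_map. split.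
  - intros [[] [Hj Hg]]; cbn in Hg; try tauto.
    destruct Hg as [<- | []]. exact Hj.
  - intro H. exists (Premise g). cbn. tauto.
Qed.

Theorem mainTheorem18 :
  forall (Gamma : formula -> Prop) (alpha : formula),
    Km_conseq Gamma alpha ->
    exists Gamma0 : list formula,
      (forall g, In g Gamma0 -> Gamma g) /\
      Km_conseq (fun g => In g Gamma0) alpha.
Proof.
  intros Gamma alpha Hcons. apply NNPP; intro Hno.
  revert Hcons. apply not_Km_conseq_iff.
  apply (compactness _ _ _ encode encode_injective val_finite
           (km_admissible Gamma) (km_dom alpha) (km_test alpha) (km_test_local alpha)).
  intros L HL.
  assert (Hfin : ~ Km_conseq (fun g => In g (premises L)) alpha).
  { intro Hfin. apply Hno. exists (premises L). split; [|exact Hfin].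
    intros g Hg. apply In_premises in Hg. exact (HL _ Hg). }
  apply not_Km_conseq_iff in Hfin as [v Hv].
  exists v. intros j Hj. apply Hv.
  destruct j; cbn; [easy | now apply In_premises | easy].
Qed.
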